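(* Let $q>2$, let $r\in\mathbb{R}$, and let $a_1,\dots,a_n>0$, $b_1,\dots,b_n>0$. Then $$\left(\sum_{i=1}^n b_i^r\right)^{1-q}\sum_{i=1}^n a_i^r \ln_q\!\left(\frac{a_i^r}{b_i^r}\right)\ \leq\ \left(\sum_{i=1}^n a_i^r\right)\left\{\ln_q\!\left(\sum_{i=1}^n a_i^r\right)-\ln_q\!\left(\sum_{i=1}^n b_i^r\right)\right\}.$$
   Context: For $q\neq 1$ and $x>0$, the $q$-deformed logarithm is $\ln_q(x)=\dfrac{x^{1-q}-1}{1-q}$. *)

From Stdlib Require Import Reals.
Open Scope R_scope.

Definition lnq (q x : R) : R := (Rpower x (1 - q) - 1) / (1 - q).

(* sum_{i=1}^n f_i, indices shifted to 0..n-1 *)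
Definition sumn (n : nat) (f : nat -> R) : R :=
  match n with O => 0 | S m => sum_f_R0 f m end.

From Stdlib Require Import Reals Lra Lia.
Open Scope R_scope.

(* Write x_i = a_i^r, y_i = b_i^r, X = sum x_i, Y = sum y_i and s = 2 - q < 0.
   Each summand on the left is x ln_q(x/y) = (y (x/y)^s - x) / (1 - q), so the
   left-hand side is governed by the weighted sum  sum y_i (x_i/y_i)^s.
   Since t |-> t^s is convex for s <= 0, it lies above its tangent line at
   m = X/Y; weighting the tangent inequality by y_i and summing, the linear
   term vanishes (sum (x_i - m y_i) = 0), which yields the Jensen-type bound
   Y (X/Y)^s <= sum y_i (x_i/y_i)^s.  Dividing by 1 - q < 0 reverses it, and
   multiplying by Y^(1-q) turns the bound into exactly X (ln_q X - ln_q Y). *)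

Lemma Rpower_succ (x s : R) : 0 < x -> Rpower x (1 + s) = x * Rpower x s.
Proof. intros hx. rewrite Rpower_plus, Rpower_1 by exact hx. reflexivity. Qed.

Lemma Rpower_div (x y s : R) : 0 < x -> 0 < y ->
  Rpower (x / y) s = Rpower x s / Rpower y s.
Proof.
  intros hx hy. unfold Rpower, Rdiv.
  rewrite ln_mult, ln_Rinv by (try apply Rinv_0_lt_compat; lra).
  rewrite <- exp_Ropp, <- exp_plus. f_equal. ring.
Qed.

Lemma sumn_le (n : nat) (f g : nat -> R) :
  (forall i, (i < n)%nat -> f i <= g i) -> sumn n f <= sumn n g.
Proof.
  destruct n as [|m]; intros hfg; simpl; [lra|].
  apply sum_Rle. intros i hi. apply hfg. lia.
Qed.

Lemma sumn_ext (n : nat) (f g : nat -> R) :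
  (forall i, (i < n)%nat -> f i = g i) -> sumn n f = sumn n g.
Proof.
  destruct n as [|m]; intros hfg; simpl; [reflexivity|].
  apply sum_eq. intros i hi. apply hfg. lia.
Qed.

Lemma sumn_pos (n : nat) (f : nat -> R) : (1 <= n)%nat ->
  (forall i, (i < n)%nat -> 0 < f i) -> 0 < sumn n f.
Proof.
  destruct n as [|m]; intros hn hf; [lia|].
  apply tech1. intros i hi. apply hf. lia.
Qed.

Lemma sumn_linear (n : nat) (f g : nat -> R) (alpha beta : R) :
  sumn n (fun i => alpha * f i + beta * g i) = alpha * sumn n f + beta * sumn n g.
Proof.
  destruct n as [|m]; simpl; [ring|].
  induction m as [|m IH]; simpl; [ring|]. rewrite IH. ring.
Qed.

(* Bernoulli's inequality for a nonpositive exponent: 1 + s (u - 1) <= u^s.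
   It follows from e^z >= 1 + z applied at z = s ln u and at z = ln u. *)
Lemma bernoulli_nonpos_exponent (s u : R) : s <= 0 -> 0 < u ->
  1 + s * (u - 1) <= Rpower u s.
Proof.
  intros hs hu. unfold Rpower.
  pose proof (exp_ineq1_le (s * ln u)) as h_exp.
  pose proof (exp_ineq1_le (ln u)) as h_ln. rewrite exp_ln in h_ln by exact hu.
  nra.
Qed.

Lemma Rpower_above_tangent (s m t : R) : s <= 0 -> 0 < m -> 0 < t ->
  Rpower m s + s * (Rpower m s / m) * (t - m) <= Rpower t s.
Proof.
  intros hs hm ht.
  assert (h_split : Rpower t s = Rpower m s * Rpower (t / m) s).
  { rewrite Rpower_div by lra. field. unfold Rpower. apply Rgt_not_eq, exp_pos. }
  assert (h_pos : 0 < Rpower m s) by apply exp_pos.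
  pose proof (bernoulli_nonpos_exponent s (t / m) hs
                (Rdiv_lt_0_compat _ _ ht hm)) as h_bern.
  rewrite h_split.
  replace (Rpower m s + s * (Rpower m s / m) * (t - m))
    with (Rpower m s * (1 + s * (t / m - 1))) by (field; lra).
  apply Rmult_le_compat_l; lra.
Qed.

(* Weighted Jensen bound: for s <= 0 and positive x_i, y_i,
   Y (X/Y)^s <= sum y_i (x_i/y_i)^s.  Summing the tangent inequality at
   m = X/Y with weights y_i, the first-order terms add up to 0. *)
Lemma weighted_power_jensen (s : R) (n : nat) (x y : nat -> R) :
  s <= 0 -> (1 <= n)%nat ->
  (forall i, (i < n)%nat -> 0 < x i) -> (forall i, (i < n)%nat -> 0 < y i) ->
  sumn n y * Rpower (sumn n x / sumn n y) s
  <= sumn n (fun i => y i * Rpower (x i / y i) s).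
Proof.
  intros hs hn hx hy.
  set (X := sumn n x). set (Y := sumn n y). set (m := X / Y).
  assert (hX : 0 < X) by (apply sumn_pos; assumption).
  assert (hY : 0 < Y) by (apply sumn_pos; assumption).
  assert (hm : 0 < m) by (apply Rdiv_lt_0_compat; assumption).
  set (slope := s * (Rpower m s / m)).
  assert (h_tangent_sum :
            sumn n (fun i => (Rpower m s - slope * m) * y i + slope * x i)
            = Y * Rpower m s).
  { rewrite sumn_linear. fold X Y. unfold m. field. lra. }
  rewrite <- h_tangent_sum. apply sumn_le. intros i hi.
  pose proof (hx i hi). pose proof (hy i hi).
  pose proof (Rpower_above_tangent s m (x i / y i) hs hm
                (Rdiv_lt_0_compat _ _ (hx i hi) (hy i hi))) as h_tan.
  fold slope in h_tan.
  replace ((Rpower m s - slope * m) * y i + slope * x i)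
    with (y i * (Rpower m s + slope * (x i / y i - m))) by (field; lra).
  apply Rmult_le_compat_l; lra.
Qed.

Lemma lnq_weighted_term (q x y : R) : q <> 1 -> 0 < x -> 0 < y ->
  x * lnq q (x / y) = (y * Rpower (x / y) (2 - q) - x) / (1 - q).
Proof.
  intros hq hx hy. unfold lnq.
  replace (2 - q) with (1 + (1 - q)) by ring.
  rewrite Rpower_succ by (apply Rdiv_lt_0_compat; assumption).
  field. split; lra.
Qed.

Lemma lnq_jensen_bound_identity (q X Y : R) : q <> 1 -> 0 < X -> 0 < Y ->
  Rpower Y (1 - q) * ((Y * Rpower (X / Y) (2 - q) - X) / (1 - q))
  = X * (lnq q X - lnq q Y).
Proof.
  intros hq hX hY. unfold lnq.
  rewrite Rpower_div by assumption.
  replace (2 - q) with (1 + (1 - q)) by ring.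
  rewrite !Rpower_succ by assumption.
  assert (Rpower Y (1 - q) <> 0) by (apply Rgt_not_eq, exp_pos).
  field. repeat split; lra.
Qed.

Theorem mainTheorem4 (q r : R) (n : nat) (a b : nat -> R)
  (hq : 2 < q) (hn : (1 <= n)%nat)
  (ha : forall i, (i < n)%nat -> 0 < a i)
  (hb : forall i, (i < n)%nat -> 0 < b i) :
  Rpower (sumn n (fun i => Rpower (b i) r)) (1 - q)
    * sumn n (fun i => Rpower (a i) r * lnq q (Rpower (a i) r / Rpower (b i) r))
  <= sumn n (fun i => Rpower (a i) r)
     * (lnq q (sumn n (fun i => Rpower (a i) r)) - lnq q (sumn n (fun i => Rpower (b i) r))).
Proof.
  (* Real powers are positive. *)
  set (x := fun i => Rpower (a i) r). set (y := fun i => Rpower (b i) r).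
  change (fun i => Rpower (a i) r * lnq q (Rpower (a i) r / Rpower (b i) r))
    with (fun i => x i * lnq q (x i / y i)).
  assert (hx : forall i, (i < n)%nat -> 0 < x i) by (intros; apply exp_pos).
  assert (hy : forall i, (i < n)%nat -> 0 < y i) by (intros; apply exp_pos).
  assert (hX : 0 < sumn n x) by (apply sumn_pos; assumption).
  assert (hY : 0 < sumn n y) by (apply sumn_pos; assumption).
  assert (h_terms : sumn n (fun i => x i * lnq q (x i / y i))
            = / (1 - q) * sumn n (fun i => y i * Rpower (x i / y i) (2 - q))
              + - / (1 - q) * sumn n x).
  { rewrite <- sumn_linear. apply sumn_ext. intros i hi.
    rewrite lnq_weighted_term by (first [lra | apply hx | apply hy]; exact hi).
    field. lra. }
  assert (h_jensen := weighted_power_jensen (2 - q) n x y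
                        ltac:(lra) hn hx hy).
  (* Dividing the Jensen bound by 1 - q < 0 reverses it. *)
  assert (h_inv_neg : / (1 - q) < 0) by (apply Rinv_lt_0_compat; lra).
  rewrite <- lnq_jensen_bound_identity by (try assumption; lra).
  apply Rmult_le_compat_l; [left; apply exp_pos|].
  rewrite h_terms.
  apply Rle_trans with (/ (1 - q) * (sumn n y * Rpower (sumn n x / sumn n y) (2 - q))
                        + - / (1 - q) * sumn n x).
  - apply Rplus_le_compat_r, Rmult_le_compat_neg_l; lra.
  - right. unfold Rdiv. ring.
Qed.
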